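(* Let $R$ be a ring. The following are equivalent: (1) $R$ is feckly clean; (2) for any disjoint closed sets $A,B$ of $\operatorname{Max}(R)$ there exists $e\in R$ such that $A\subseteq V(e)$, $B\subseteq V(1-e)$ and $eR(1-e)\subseteq J(R)$; (3) for any $a\in R$ there exists $e\in R$ such that $V(a)\subseteq V(e)$, $V(1-a)\subseteq V(1-e)$ and $eR(1-e)\subseteq J(R)$.
   Context: Rings are associative with identity, not necessarily commutative; $J(R)$ is the Jacobson radical. An element $u\in R$ is full if $RuR=R$. An element $a\in R$ is feckly clean if there exist $e\in R$ and a full element $u\in R$ with $a=e+u$ and $eR(1-e)\subseteq J(R)$; $R$ is feckly clean if every element is feckly clean. $\operatorname{Max}(R)$ is the set of all maximal (two-sided) ideals of $R$, topologized so that the closed sets are exactly the sets $V(I)=\{P\in\operatorname{Max}(R): I\subseteq P\}$ for ideals $I$ of $R$. For $a\in R$, $V(a)=V(RaR)$. *)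

(* Rings: pzRingType (associative, with 1, not necessarily
   commutative; the zero ring is allowed). Subsets of R are predicates R -> Prop. *)
From HB Require Import structures.
From mathcomp Require Import all_boot all_order all_algebra.
Set Implicit Arguments. Unset Strict Implicit. Unset Printing Implicit Defensive.
Import GRing.Theory.
Local Open Scope ring_scope.

Section Defs.
Variable R : pzRingType.

Definition is_ideal (I : R -> Prop) : Prop :=
  [/\ I 0, (forall x y, I x -> I y -> I (x - y)),
      (forall r x, I x -> I (r * x)) & (forall r x, I x -> I (x * r))].

Definition is_left_ideal (L : R -> Prop) : Prop :=
  [/\ L 0, (forall x y, L x -> L y -> L (x - y)) & (forall r x, L x -> L (r * x))].

Definition is_max_ideal (P : R -> Prop) : Prop :=
  [/\ is_ideal P, ~ P 1 &
      forall I, is_ideal I -> (forall x, P x -> I x) -> I 1 \/ (forall x, I x -> P x)].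

Definition is_max_left_ideal (L : R -> Prop) : Prop :=
  [/\ is_left_ideal L, ~ L 1 &
      forall I, is_left_ideal I -> (forall x, L x -> I x) -> I 1 \/ (forall x, I x -> L x)].

Definition jacobson (x : R) : Prop :=
  forall L, is_max_left_ideal L -> L x.

(* R a R : the two-sided ideal generated by a (finite sums of r a s) *)
Definition RaR (a : R) (x : R) : Prop :=
  exists s : seq (R * R), x = \sum_(p <- s) p.1 * a * p.2.

Definition full (u : R) : Prop := forall x, RaR u x.

Definition corner_in_J (e : R) : Prop :=
  forall r, jacobson (e * r * (1 - e)).

Definition feckly_clean_elt (a : R) : Prop :=
  exists e u, a = e + u /\ full u /\ corner_in_J e.

Definition feckly_clean_ring : Prop := forall a, feckly_clean_elt a.

(* Max(R) and its topology: a subset of Max(R) is a predicate on (R -> Prop)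
   that holds only for maximal ideals. *)
Definition V (I : R -> Prop) (P : R -> Prop) : Prop :=
  is_max_ideal P /\ (forall x, I x -> P x).

Definition Velt (a : R) : (R -> Prop) -> Prop := V (RaR a).

Definition closed_Max (A : (R -> Prop) -> Prop) : Prop :=
  exists I, is_ideal I /\ (forall P, A P <-> V I P).

Definition subset_Max (A B : (R -> Prop) -> Prop) : Prop := forall P, A P -> B P.

Definition disjoint_Max (A B : (R -> Prop) -> Prop) : Prop := forall P, ~ (A P /\ B P).

End Defs.

From HB Require Import structures.
From mathcomp Require Import all_boot all_order all_algebra.
From mathcomp Require classical_sets.
From Stdlib Require Import Classical FunctionalExtensionality PropExtensionality.
Import GRing.Theory.
Local Open Scope ring_scope.
Set Implicit Arguments. Unset Strict Implicit.

(* Two facts about maximal two-sided ideals drive everything: [J(R)] lies in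
   each of them, and each of them is prime.  Hence if [eR(1 - e)] is in [J(R)],
   every maximal ideal contains [e] or [1 - e], and [u] is full iff it lies in
   no maximal ideal.  Writing [1 - a = e + u], the element [u] is full exactly
   when [V(a)] lands in [V(e)] and [V(1 - a)] in [V(1 - e)]; and disjoint closed
   sets [V(I)], [V(K)] come from a splitting [1 = i + k] with [i] in [I], [k] in
   [K], which reduces (2) to (3) applied to [i]. *)

Definition chain (T : Type) (F : (T -> Prop) -> Prop) : Prop :=
  forall X Y, F X -> F Y -> (forall x, X x -> Y x) \/ (forall x, Y x -> X x).

Definition union (T : Type) (F : (T -> Prop) -> Prop) (x : T) : Prop :=
  exists2 X, F X & X x.

Lemma chain_union2 (T : Type) (F : (T -> Prop) -> Prop) (x y : T) :
  chain F -> union F x -> union F y -> exists Z, [/\ F Z, Z x & Z y].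
Proof.
move=> Fchain [X FX Xx] [Y FY Yy].
by case: (Fchain X Y FX FY) => XY; [exists Y; split; auto | exists X; split; auto].
Qed.

Lemma Zorn_maximal_avoiding (T : Type) (Q : (T -> Prop) -> Prop) (one : T)
    (I : T -> Prop) :
  (forall F, (exists X, F X) -> (forall X, F X -> Q X) -> chain F -> Q (union F)) ->
  Q I -> ~ I one -> (exists x, I x) ->
  exists M, [/\ Q M, (forall x, I x -> M x), ~ M one &
    forall Y, Q Y -> (forall x, M x -> Y x) -> Y one \/ (forall x, Y x -> M x)].
Proof.
move=> Qunion QI nIone [i0 Ii0].
(* [Zorn_bigcup] also admits the empty chain, whose union is empty: hence the
   guard in [good], and the check below that the maximal good set is inhabited. *)
pose good X := (exists x, X x) -> [/\ Q X, (forall x, I x -> X x) & ~ X one].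
have [|M [gM maxM]] := @classical_sets.Zorn_bigcup T good.
  move=> F Fgood Fchain; change (good (union F)) => -[x0 [X0 FX0 X0x0]].
  have [_ IX0 _] := Fgood X0 FX0 (ex_intro _ x0 X0x0).
  pose F' X := F X /\ exists x, X x.
  have -> : union F = union F'.
    apply: functional_extensionality => x; apply: propositional_extensionality.
    by split=> -[X FX Xx]; exists X => //; [split; last exists x | case: FX].
  split.
  - apply: Qunion; first by exists X0; split; last exists x0.
      by move=> X [FX /(Fgood X FX) []].
    by move=> X Y [FX _] [FY _]; apply: Fchain.
  - by move=> x Ix; exists X0; [split; last exists x0 | apply: IX0].
  - by case=> X [FX /(Fgood X FX) []].
have [x0 Mx0] : exists x, M x.
  apply: NNPP => nM; apply: (maxM I); last by move=> _; split.
  by split=> [x Mx|IM]; [case: nM; exists x | apply: nM; exists i0; apply: IM].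
have [QM IM nM] := gM (ex_intro _ x0 Mx0).
exists M; split=> // Y QY MY; case: (classic (Y one)) => [|nY]; first by left.
right=> x Yx; apply: NNPP => nMx; apply: (maxM Y).
  by split=> // YM; apply: nMx; apply: YM.
by move=> _; split=> // z Iz; apply/MY/IM.
Qed.

Section RingIdeals.
Variable R : pzRingType.
Implicit Types (I K L P : R -> Prop) (a b e s u x y z : R).

Lemma ideal_left_ideal I : is_ideal I -> is_left_ideal I.
Proof. by case. Qed.

Lemma ideal_of_left_ideal I :
  is_left_ideal I -> (forall r x, I x -> I (x * r)) -> is_ideal I.
Proof. by case. Qed.

Lemma left_ideal_add L x y : is_left_ideal L -> L x -> L y -> L (x + y).
Proof.
case=> L0 LB _ Lx Ly; have Lny : L (- y) by rewrite -sub0r; apply: LB.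
by rewrite -[y]opprK; apply: LB.
Qed.

Lemma ideal_add I x y : is_ideal I -> I x -> I y -> I (x + y).
Proof. by move/ideal_left_ideal; apply: left_ideal_add. Qed.

Lemma ideal_sub I x y : is_ideal I -> I x -> I y -> I (x - y).
Proof. by case=> _ IB _ _; apply: IB. Qed.

Lemma ideal_sum I (T : Type) (r : seq T) (F : T -> R) :
  is_ideal I -> (forall i, I (F i)) -> I (\sum_(i <- r) F i).
Proof.
move=> hI IF; elim: r => [|i r IH]; first by rewrite big_nil; case: hI.
by rewrite big_cons; apply: ideal_add.
Qed.

Lemma chain_union_left_ideal (F : (R -> Prop) -> Prop) :
  (exists X, F X) -> (forall X, F X -> is_left_ideal X) -> chain F ->
  is_left_ideal (union F).
Proof.
move=> [X0 FX0] Fleft Fchain; split.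
- by exists X0 => //; case: (Fleft X0 FX0).
- move=> x y Ux Uy; have [Z [FZ Zx Zy]] := chain_union2 Fchain Ux Uy.
  by exists Z => //; case: (Fleft Z FZ) => _ ZB _; apply: ZB.
- by move=> r x [Z FZ Zx]; exists Z => //; case: (Fleft Z FZ) => _ _ Zl; apply: Zl.
Qed.

Lemma chain_union_ideal (F : (R -> Prop) -> Prop) :
  (exists X, F X) -> (forall X, F X -> is_ideal X) -> chain F ->
  is_ideal (union F).
Proof.
move=> FX0 Fideal Fchain; apply: ideal_of_left_ideal.
  by apply: chain_union_left_ideal => // X /Fideal /ideal_left_ideal.
by move=> r x [Z FZ Zx]; exists Z => //; case: (Fideal Z FZ) => _ _ _ Zr; apply: Zr.
Qed.

Lemma exists_max_left_ideal L : is_left_ideal L -> ~ L 1 ->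
  exists M, is_max_left_ideal M /\ (forall x, L x -> M x).
Proof.
move=> hL nL1; have L0 : L 0 by case: hL.
have [|M [hM LM nM1 maxM]] := Zorn_maximal_avoiding chain_union_left_ideal hL nL1.
  by exists 0.
by exists M; split.
Qed.

Lemma exists_max_ideal I : is_ideal I -> ~ I 1 ->
  exists P, is_max_ideal P /\ (forall x, I x -> P x).
Proof.
move=> hI nI1; have I0 : I 0 by case: hI.
have [|P [hP IP nP1 maxP]] := Zorn_maximal_avoiding chain_union_ideal hI nI1.
  by exists 0.
by exists P; split.
Qed.

Definition sumset I K z : Prop := exists i k, [/\ I i, K k & z = i + k].

Lemma sumset_left_ideal L K :
  is_left_ideal L -> is_left_ideal K -> is_left_ideal (sumset L K).
Proof.
move=> [L0 LB Ll] [K0 KB Kl]; split.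
- by exists 0, 0; rewrite addr0.
- move=> _ _ [l [k [Ll' Kk ->]]] [l' [k' [Ll'' Kk' ->]]].
  by exists (l - l'), (k - k'); split; [apply: LB | apply: KB | rewrite opprD addrACA].
- move=> r _ [l [k [Ll' Kk ->]]].
  by exists (r * l), (r * k); split; [apply: Ll | apply: Kl | rewrite mulrDr].
Qed.

Lemma sumset_ideal I K : is_ideal I -> is_ideal K -> is_ideal (sumset I K).
Proof.
move=> hI hK; apply: ideal_of_left_ideal.
  exact: sumset_left_ideal (ideal_left_ideal hI) (ideal_left_ideal hK).
case: hI hK => _ _ _ Ir [_ _ _ Kr] r _ [i [k [Ii Kk ->]]].
by exists (i * r), (k * r); split; [apply: Ir | apply: Kr | rewrite mulrDl].
Qed.

Lemma max_left_ideal_comax L K : is_max_left_ideal L -> is_left_ideal K ->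
  ~ (forall x, K x -> L x) -> sumset L K 1.
Proof.
move=> [hL _ maxL] hK nKL; have K0 : K 0 by case: hK.
have L0 : L 0 by case: hL.
have [|//|sumL] := maxL _ (sumset_left_ideal hL hK).
  by move=> x Lx; exists x, 0; rewrite addr0.
by case: nKL => k Kk; apply: sumL; exists 0, k; rewrite add0r.
Qed.

Lemma max_ideal_comax P K : is_max_ideal P -> is_ideal K ->
  ~ (forall x, K x -> P x) -> sumset P K 1.
Proof.
move=> [hP _ maxP] hK nKP; have K0 : K 0 by case: hK.
have P0 : P 0 by case: hP.
have [|//|sumP] := maxP _ (sumset_ideal hP hK).
  by move=> x Px; exists x, 0; rewrite addr0.
by case: nKP => k Kk; apply: sumP; exists 0, k; rewrite add0r.
Qed.

Lemma max_ideal_exclusive P x : is_max_ideal P -> P x -> P (1 - x) -> False.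
Proof.
by move=> [hP nP1 _] Px Px'; apply: nP1; rewrite -(subrK x 1) addrC; apply: ideal_add.
Qed.

Lemma RaR_ideal a : is_ideal (RaR a).
Proof.
split.
- by exists [::]; rewrite big_nil.
- move=> _ _ [r1 ->] [r2 ->]; exists (r1 ++ map (fun p => (- p.1, p.2)) r2).
  rewrite big_cat big_map /= -sumrN; congr (_ + _).
  by apply: eq_bigr => p _; rewrite !mulNr.
- move=> c _ [r ->]; exists (map (fun p => (c * p.1, p.2)) r).
  by rewrite big_map mulr_sumr; apply: eq_bigr => p _; rewrite !mulrA.
- move=> c _ [r ->]; exists (map (fun p => (p.1, p.2 * c)) r).
  by rewrite big_map mulr_suml; apply: eq_bigr => p _; rewrite !mulrA.
Qed.

Lemma RaR_id a : RaR a a.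
Proof. by exists [:: (1, 1)]; rewrite big_seq1 /= mul1r mulr1. Qed.

Lemma RaR_min I a x : is_ideal I -> I a -> RaR a x -> I x.
Proof.
move=> hI Ia [r ->]; apply: ideal_sum => // p.
by case: hI => _ _ Il Ir; apply/Ir/Il.
Qed.

Lemma Velt_iff a P : Velt a P <-> is_max_ideal P /\ P a.
Proof.
split=> [[hP RaRP]|[hP Pa]]; first by split=> //; apply/RaRP/RaR_id.
by split=> // x; apply: RaR_min Pa; case: hP.
Qed.

Lemma full_iff_not_in_max_ideal u : full u <-> forall P, is_max_ideal P -> ~ P u.
Proof.
split=> [fu P [hP nP1 _] Pu|noP x]; first by apply/nP1/(RaR_min hP Pu (fu 1)).
case: (classic (RaR u 1)) => [RaR1|nRaR1].
  by case: (RaR_ideal u) => _ _ _ /(_ x 1 RaR1); rewrite mul1r.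
have [P [hP RaRP]] := exists_max_ideal (RaR_ideal u) nRaR1.
by case: (noP P hP); apply/RaRP/RaR_id.
Qed.

Lemma RaR_mul_in_ideal P a b w w' : is_ideal P -> (forall r, P (a * r * b)) ->
  RaR a w -> RaR b w' -> P (w * w').
Proof.
move=> hP aRb [r ->] [r' ->]; rewrite mulr_suml; apply: ideal_sum => // p.
rewrite mulr_sumr; apply: ideal_sum => // q.
have -> : p.1 * a * p.2 * (q.1 * b * q.2) = p.1 * (a * (p.2 * q.1) * b * q.2).
  by rewrite !mulrA.
by case: hP => _ _ Pl Pr; apply/Pl/Pr.
Qed.

Lemma max_ideal_prime P a b : is_max_ideal P -> (forall r, P (a * r * b)) ->
  P a \/ P b.
Proof.
move=> hP aRb; have [hI nP1 _] := hP.
case: (classic (P a)) => Pa; first by left.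
case: (classic (P b)) => Pb; first by right.
have notin c : ~ P c -> ~ (forall x, RaR c x -> P x).
  by move=> nPc RaRP; apply/nPc/RaRP/RaR_id.
have [p [w [Pp RaRw E]]] := max_ideal_comax hP (RaR_ideal a) (notin a Pa).
have [p' [w' [Pp' RaRw' E']]] := max_ideal_comax hP (RaR_ideal b) (notin b Pb).
case: nP1; rewrite -(mulr1 1) {1}E E' mulrDl !mulrDr.
have [_ _ Pl Pr] := hI.
by apply: ideal_add => //; apply: ideal_add => //;
  [apply: Pr | apply: Pr | apply: Pl | apply: RaR_mul_in_ideal aRb RaRw RaRw'].
Qed.

Definition left_principal z x : Prop := exists t, x = t * z.

Lemma left_principal_left_ideal z : is_left_ideal (left_principal z).
Proof.
split; first by exists 0; rewrite mul0r.
  by move=> _ _ [t ->] [t' ->]; exists (t - t'); rewrite mulrBl.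
by move=> r _ [t ->]; exists (r * t); rewrite mulrA.
Qed.

Definition colon L s x : Prop := L (x * s).

Lemma colon_max_left_ideal L s : is_max_left_ideal L -> ~ L s ->
  is_max_left_ideal (colon L s).
Proof.
move=> hM nLs; have [[L0 LB Ll] _ _] := hM; split.
- split; rewrite /colon; first by rewrite mul0r.
    by move=> x y Lx Ly; rewrite mulrBl; apply: LB.
  by move=> r x Lx; rewrite -mulrA; apply: Ll.
- by rewrite /colon mul1r.
move=> I hI colonI.
case: (classic (exists2 y, I y & ~ colon L s y)) => [[y Iy nLys]|noy]; last first.
  by right=> y Iy; apply: NNPP => nLys; apply: noy; exists y.
left.
have [|l [_ [Ll' [t ->]] E1]] :=
  max_left_ideal_comax hM (left_principal_left_ideal (y * s)).
  by move=> inL; apply/nLys/inL; exists 1; rewrite mul1r.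
(* From [1 = l + t y s] we get [(1 - s t y) s = s l], which lies in [L]. *)
have I1sty : I (1 - s * t * y).
  apply: colonI; rewrite /colon mulrBl mul1r -!mulrA.
  have -> : s - s * (t * (y * s)) = s * l by rewrite -{1}[s]mulr1 E1 mulrDr addrK.
  exact: Ll.
have [_ _ Il] := hI; rewrite -(subrK (s * t * y) 1).
by apply: left_ideal_add => //; apply: Il.
Qed.

Definition ann L z : Prop := forall s, L (z * s).

Lemma ann_ideal L : is_left_ideal L -> is_ideal (ann L).
Proof.
move=> [L0 LB Ll]; split.
- by move=> s; rewrite mul0r.
- by move=> x y Lx Ly s; rewrite mulrBl; apply: LB.
- by move=> r x Lx s; rewrite -mulrA; apply: Ll.
- by move=> r x Lx s; rewrite -mulrA.
Qed.

(* [P] is the annihilator of a simple module [R/L], and [J(R)] annihilates every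
   simple module because each [(L : s)] with [s] not in [L] is again maximal. *)
Lemma jacobson_max_ideal P x : is_max_ideal P -> jacobson x -> P x.
Proof.
move=> hP Jx; have [hI nP1 maxP] := hP.
have [L [hL PL]] := exists_max_left_ideal (ideal_left_ideal hI) nP1.
have [hLl nL1 _] := hL; have [_ _ Ll] := hLl.
have [|annL1|annP] := maxP _ (ann_ideal hLl).
- by move=> z Pz s; apply: PL; case: hI => _ _ _ Pr; apply: Pr.
- by case: nL1; have := annL1 1; rewrite mulr1.
apply: annP => s; case: (classic (L s)) => Ls; first exact: Ll.
exact: Jx _ (colon_max_left_ideal hL Ls).
Qed.

Lemma corner_in_J_max_ideal P e : is_max_ideal P -> corner_in_J e ->
  P e \/ P (1 - e).
Proof.
move=> hP eJ; apply: (max_ideal_prime hP) => r.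
exact: jacobson_max_ideal hP (eJ r).
Qed.

Lemma disjoint_closed_comax I K : is_ideal I -> is_ideal K ->
  disjoint_Max (V I) (V K) -> sumset I K 1.
Proof.
move=> hI hK dis; apply: NNPP => nsum1.
have [P [hP sumP]] := exists_max_ideal (sumset_ideal hI hK) nsum1.
have [I0 _ _ _] := hI; have [K0 _ _ _] := hK.
apply: (dis P); split; split=> // x Hx; apply: sumP.
  by exists x, 0; rewrite addr0.
by exists 0, x; rewrite add0r.
Qed.

End RingIdeals.

Section Separation.
Variable R : pzRingType.

Definition separates_closed_Max : Prop :=
  forall A B : (R -> Prop) -> Prop,
    closed_Max A -> closed_Max B -> disjoint_Max A B ->
    exists e : R, subset_Max A (Velt e) /\ subset_Max B (Velt (1 - e))
                  /\ corner_in_J e.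

Definition separates_Velt : Prop :=
  forall a : R, exists e : R,
    subset_Max (Velt a) (Velt e) /\ subset_Max (Velt (1 - a)) (Velt (1 - e))
    /\ corner_in_J e.

Lemma feckly_clean_separates_Velt : feckly_clean_ring R -> separates_Velt.
Proof.
move=> fc a; have [e [u [Ea [fu eJ]]]] := fc (1 - a).
have uP P : is_max_ideal P -> ~ P u by move/full_iff_not_in_max_ideal: fu; apply.
have Eu : u = 1 - a - e by rewrite Ea addrAC subrr add0r.
exists e; split; [|split=> //] => P /Velt_iff [hP Pa]; apply/Velt_iff; split=> //.
  have [//|Pe'] := corner_in_J_max_ideal hP eJ; case: (uP P hP).
  by rewrite Eu addrAC; apply: ideal_sub => //; case: hP.
have [Pe|//] := corner_in_J_max_ideal hP eJ; case: (uP P hP).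
by rewrite Eu; apply: ideal_sub => //; case: hP.
Qed.

Lemma separates_Velt_feckly_clean : separates_Velt -> feckly_clean_ring R.
Proof.
move=> sep a; have [e [sub1a [sub1a' eJ]]] := sep (1 - a).
exists e, (a - e); split; first by rewrite addrC subrK.
split=> //; apply/full_iff_not_in_max_ideal => P hP Pae.
have hI : is_ideal P by case: hP.
have [Pe|Pe'] := corner_in_J_max_ideal hP eJ.
  have Pa : P a by rewrite -(subrK e a); apply: ideal_add.
  have /Velt_iff [_] : Velt (1 - e) P.
    by apply: sub1a'; rewrite opprB addrC subrK; apply/Velt_iff.
  exact: max_ideal_exclusive hP Pe.
have P1a : P (1 - a).
  have -> : 1 - a = 1 - e - (a - e) by rewrite opprB addrA subrK.
  exact: ideal_sub.
have /Velt_iff [_ Pe] : Velt e P by apply/sub1a/Velt_iff.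
exact: max_ideal_exclusive hP Pe Pe'.
Qed.

Lemma separates_closed_Velt : separates_closed_Max -> separates_Velt.
Proof.
move=> sep a; apply: sep.
- by exists (RaR a); split; [exact: RaR_ideal | move=> P].
- by exists (RaR (1 - a)); split; [exact: RaR_ideal | move=> P].
- by move=> P [/Velt_iff [hP Pa] /Velt_iff [_ Pa']]; apply: max_ideal_exclusive Pa'.
Qed.

(* Disjointness of [V(I)] and [V(K)] means [I + K = R]; split [1 = i + k] by [e]. *)
Lemma separates_Velt_closed : separates_Velt -> separates_closed_Max.
Proof.
move=> sep A B [I [hI AE]] [K [hK BE]] dis.
have [i [k [Ii Kk E1]]] : sumset I K 1.
  by apply: disjoint_closed_comax => // P [/AE VIP /BE VKP]; apply: (dis P).
have [e [subi [subk eJ]]] := sep i; exists e; split; [|split=> //].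
  by move=> P /AE [hP IP]; apply/subi/Velt_iff; split=> //; apply: IP.
move=> P /BE [hP KP]; apply/subk/Velt_iff; split=> //.
by rewrite E1 addrAC subrr add0r; apply: KP.
Qed.

End Separation.

Theorem theorem2p3 (R : pzRingType) :
  (feckly_clean_ring R <->
   (forall A B : (R -> Prop) -> Prop,
      closed_Max A -> closed_Max B -> disjoint_Max A B ->
      exists e : R, subset_Max A (Velt e) /\ subset_Max B (Velt (1 - e))
                    /\ corner_in_J e))
  /\
  (feckly_clean_ring R <->
   (forall a : R, exists e : R,
      subset_Max (Velt a) (Velt e) /\ subset_Max (Velt (1 - a)) (Velt (1 - e))
      /\ corner_in_J e)).
Proof.
have fc_Velt := @feckly_clean_separates_Velt R.
have Velt_fc := @separates_Velt_feckly_clean R.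
split; split.
- by move/fc_Velt; apply: separates_Velt_closed.
- by move/separates_closed_Velt; apply: Velt_fc.
- exact: fc_Velt.
- exact: Velt_fc.
Qed.
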